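(* Let $R$ be a $*$-ring with unity. Define a relation $\leq$ on $R$ by: $a\leq b$ if and only if there exists $x\in R$ such that $a=xa=xb=ax^*=bx^*$. Then $\leq$ is a partial order on $R$.
   Context: A $*$-ring is an associative ring with an involution $*$, i.e. a map satisfying $(a+b)^*=a^*+b^*$, $(ab)^*=b^*a^*$, $(a^* )^*=a$ for all $a,b$. *)

From mathcomp Require Import all_boot all_algebra.
Set Implicit Arguments. Unset Strict Implicit. Unset Printing Implicit Defensive.
Import GRing.Theory.
Local Open Scope ring_scope.

Definition is_involution (R : pzRingType) (s : R -> R) : Prop :=
  [/\ forall a b : R, s (a + b) = s a + s b,
      forall a b : R, s (a * b) = s b * s a
    & forall a : R, s (s a) = a].

Definition star_le (R : pzRingType) (s : R -> R) (a b : R) : Prop :=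
  exists x : R, [/\ a = x * a, a = x * b, a = a * s x & a = b * s x].

Definition is_partial_order (T : Type) (le : T -> T -> Prop) : Prop :=
  [/\ forall a, le a a,
      forall a b, le a b -> le b a -> a = b
    & forall a b c, le a b -> le b c -> le a c].

(* Reflexivity is witnessed by x = 1, since an anti-multiplicative involution
   fixes 1.  For antisymmetry, with a = x b and b = b y^* = a y^* one gets
   a = x b y^* = a y^* = b.  For transitivity, if x witnesses a <= b and y
   witnesses b <= c, then y a = a = a y^* because a = b x^* with b = y b and
   a = x b with b = b y^*; hence x y witnesses a <= c, as (x y)^* = y^* x^*. *)

From mathcomp Require Import all_boot all_algebra.
Import GRing.Theory.
Local Open Scope ring_scope.

Section StarOrder.

Variables (R : pzRingType) (s : R -> R).

Lemma star_le_antisym (a b : R) : star_le s a b -> star_le s b a -> a = b.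
Proof.
move=> [x [_ a_xb _ _]] [y [_ _ b_bsy b_asy]].
by rewrite a_xb {1}b_bsy mulrA -a_xb -b_asy.
Qed.

Hypothesis sM : forall a b : R, s (a * b) = s b * s a.

Lemma star_le_trans (a b c : R) :
  star_le s a b -> star_le s b c -> star_le s a c.
Proof.
move=> [x [a_xa a_xb a_asx a_bsx]] [y [b_yb b_yc b_bsy b_csy]].
have ya : y * a = a by rewrite {1}a_bsx mulrA -b_yb -a_bsx.
have asy : a * s y = a by rewrite {1}a_xb -mulrA -b_bsy -a_xb.
exists (x * y); split.
- by rewrite -mulrA ya -a_xa.
- by rewrite -mulrA -b_yc -a_xb.
- by rewrite sM mulrA asy -a_asx.
- by rewrite sM mulrA -b_csy -a_bsx.
Qed.

Hypothesis sK : involutive s.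

Lemma antimul_involution1 : s 1 = 1.
Proof. by have := sM (s 1) 1; rewrite mulr1 !sK mulr1 => /esym. Qed.

Lemma star_le_refl (a : R) : star_le s a a.
Proof. by exists 1; rewrite antimul_involution1 mul1r mulr1. Qed.

End StarOrder.

Theorem mainTheorem1 (R : pzRingType) (s : R -> R) :
  is_involution s -> is_partial_order (star_le s).
Proof.
case=> _ sM sK; split.
- exact: star_le_refl.
- exact: star_le_antisym.
- exact: star_le_trans.
Qed.
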